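(* Let $n\ge3$, $b\in\mathbb{R}^n$, $K\in\{0,\ldots,n-3\}$, $\gamma>0$, and let $x^*$ be a d-stationary point of $$\min_{x\in\mathbb{R}^n}\ \tfrac12\|b-x\|_2^2+\gamma T_{K,n-2,1}(D^{(2,n)}x).$$ Let $X\in\mathbb{R}^{n\times2}$ be the matrix whose $i$-th row is $(1,i)$ and $\hat b=X(X^\top X)^{-1}X^\top b$. If $$\gamma>\frac{\|b-\hat b\|_2}{2\sqrt{(1-\cos\frac{\pi}{n})(1-\cos\frac{\pi}{n-1})}},$$ then $T_{K,n-2,1}(D^{(2,n)}x^* )=0$.
   Context: $D^{(2,n)}\in\mathbb{R}^{(n-2)\times n}$ is the second-order difference matrix: its $i$-th row has entries $1,-2,1$ in columns $i,i+1,i+2$ and zeros elsewhere. $T_{K,m,1}(z)$ for $z\in\mathbb{R}^m$ is the sum of the $m-K$ smallest values among $|z_1|,\ldots,|z_m|$. A point is d-stationary if the directional derivative of the objective there is $\ge0$ in every direction. *)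

From HB Require Import structures.
From mathcomp Require Import all_boot all_order all_algebra.
From mathcomp Require Import all_classical all_reals all_analysis.
Set Implicit Arguments. Unset Strict Implicit. Unset Printing Implicit Defensive.
Import Order.TTheory GRing.Theory Num.Theory.
Import numFieldNormedType.Exports.
Local Open Scope classical_set_scope.
Local Open Scope ring_scope.

Section Defs.
Variable R : realType.

Definition diff2 (n : nat) : 'M[R]_(n - 2, n) :=
  \matrix_(i < n - 2, j < n)
    (if j == i :> nat then 1
     else if j == i.+1 :> nat then -2
     else if j == i.+2 :> nat then 1 else 0).

Definition trunc_l1 (K m : nat) (z : 'cV[R]_m) : R :=
  \sum_(a <- take (m - K) (sort <=%R [seq `|z i 0| | i <- enum 'I_m])) a.

Definition norm2 (n : nat) (v : 'cV[R]_n) : R :=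
  Num.sqrt (\sum_(i < n) v i 0 ^+ 2).

Definition objective (n K : nat) (b : 'cV[R]_n) (gamma : R) (x : 'cV[R]_n) : R :=
  2^-1 * norm2 (b - x) ^+ 2 + gamma * trunc_l1 K (diff2 n *m x).

Definition dir_deriv_is (n : nat) (f : 'cV[R]_n -> R) (x d : 'cV[R]_n) (l : R) : Prop :=
  (fun t : R => (f (x + t *: d) - f x) / t) @ 0^'+ --> l.

Definition d_stationary (n : nat) (f : 'cV[R]_n -> R) (x : 'cV[R]_n) : Prop :=
  forall d : 'cV[R]_n, exists l : R, dir_deriv_is f x d l /\ 0 <= l.

Definition design (n : nat) : 'M[R]_(n, 2) :=
  \matrix_(i < n, j < 2) (if j == 0 :> nat then 1 else (i.+1)%:R).

Definition bhat (n : nat) (b : 'cV[R]_n) : 'cV[R]_n :=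
  design n *m invmx ((design n)^T *m design n) *m (design n)^T *m b.

End Defs.

From HB Require Import structures.
From mathcomp Require Import all_boot all_order all_algebra.
From mathcomp Require Import all_classical all_reals all_analysis.
From mathcomp Require Import perm.
From mathcomp Require Import ring lra zify.
Import Order.TTheory GRing.Theory Num.Theory.
Import numFieldNormedType.Exports.
Set Implicit Arguments. Unset Strict Implicit. Unset Printing Implicit Defensive.
Local Open Scope ring_scope.

(* Let r = b - x, T = T_{K,n-2,1}(D x) and let S index the n - 2 - K smallest entries of
   |D x|, so that T is the sum over S and bounds from below the sum over S for every vector.
   Moving from x towards bhat, which D annihilates, scales D x by 1 - t; stationarity then gives
   <r, bhat - x> + gamma T <= 0, hence ||r|| <= ||b - bhat||.  Moving along -u, where D u agrees
   with D x on S and vanishes off S, also shrinks the penalty by 1 - t, so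
   gamma T <= <r, u> <= ||r|| ||u||.  Two discrete Poincare inequalities produce such a u with
   sigma ||u|| <= T, where sigma^2 = (2 - 2 cos(pi/n)) (2 - 2 cos(pi/(n-1))).  Therefore
   gamma sigma T <= ||b - bhat|| T, which forces T = 0 under the hypothesis on gamma. *)

Section Poincare.
Variable R : realType.

(* The smallest positive eigenvalue of the Laplacian of the path on [m] vertices, and also the
   smallest eigenvalue of the Dirichlet Laplacian on its [m - 1] inner vertices. *)
Definition spectral_gap (m : nat) : R := 2 - 2 * cos (pi / m%:R).

Lemma sin_frac_pi_gt0 (i m : nat) : (0 < i < m)%N -> 0 < sin (i%:R * (pi / m%:R)) :> R.
Proof.
case/andP => i_gt0 im; have m_gt0 : (0 < m)%N by apply: leq_ltn_trans im.
apply: sin_gt0_pi; apply/andP; split.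
  by rewrite mulr_gt0 ?ltr0n // divr_gt0 ?pi_gt0 ?ltr0n.
by rewrite mulrCA gtr_pMr ?pi_gt0 // ltr_pdivrMr ?ltr0n ?mul1r ?ltr_nat.
Qed.

Lemma spectral_gap_gt0 (m : nat) : (1 < m)%N -> 0 < spectral_gap m.
Proof.
move=> m_gt1; have := @sin_frac_pi_gt0 1 m m_gt1; rewrite mul1r => s_gt0.
have := cos2Dsin2 (pi / m%:R : R); have := exprn_gt0 2 s_gt0.
rewrite /spectral_gap !expr2; nra.
Qed.

Lemma sqrt_spectral_gapM (m m' : nat) :
  Num.sqrt (spectral_gap m * spectral_gap m') =
    2 * Num.sqrt ((1 - cos (pi / m%:R)) * (1 - cos (pi / m'%:R))).
Proof.
rewrite (_ : spectral_gap m * _ = 2 ^+ 2 * ((1 - cos (pi / m%:R)) * (1 - cos (pi / m'%:R)))).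
  by rewrite sqrtrM ?sqr_ge0 // sqrtr_sqr ger0_norm.
by rewrite /spectral_gap; ring.
Qed.

Lemma sin_mul_recurrence (t : R) (j : nat) :
  sin (j%:R * t) + sin (j.+2%:R * t) = 2 * cos t * sin (j.+1%:R * t).
Proof.
have -> : j.+2%:R * t = j.+1%:R * t + t by rewrite -addn1 natrD mulrDl mul1r.
have -> : j%:R * t = j.+1%:R * t - t by rewrite -addn1 natrD mulrDl mul1r addrK.
rewrite sinB sinD; ring.
Qed.

(* A discrete Picone inequality; each degenerate weight comes with a vanishing value, and then
   Rocq's [_ / 0 = 0] makes the corresponding weight equal to 1. *)
Lemma picone_le (p q y y' : R) : 0 <= p -> 0 <= q -> (p = 0 -> y = 0) -> (q = 0 -> y' = 0) ->
  (1 - p / q) * y' ^+ 2 + (1 - q / p) * y ^+ 2 <= (y' - y) ^+ 2.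
Proof.
rewrite !le0r => /predU1P[-> _ /(_ erefl) -> _ | p_gt0].
  by rewrite mul0r subr0 invr0 mulr0 subr0 !mul1r expr0n /= addr0 subr0.
case/predU1P=> [-> _ /(_ erefl) -> | q_gt0 _ _].
  by rewrite invr0 mulr0 subr0 mul0r subr0 mul1r expr0n /= mul1r add0r sub0r sqrrN.
rewrite -subr_ge0.
have -> : (y' - y) ^+ 2 - ((1 - p / q) * y' ^+ 2 + (1 - q / p) * y ^+ 2) =
    (p * y' - q * y) ^+ 2 / (p * q).
  by field; rewrite !gt_eqF.
by rewrite divr_ge0 ?sqr_ge0 ?mulr_ge0 ?ltW.
Qed.

(* The weights come from the ground state [i |-> sin (i pi / m)] of the Dirichlet Laplacian. *)
Lemma poincare_dirichlet (m : nat) (Y : nat -> R) : (1 < m)%N -> Y 0%N = 0 -> Y m = 0 ->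
  spectral_gap m * \sum_(i < m) Y i ^+ 2 <= \sum_(i < m) (Y i.+1 - Y i) ^+ 2.
Proof.
move=> m_gt1 Y0 Ym; pose th : R := pi / m%:R; pose phi i := sin (i%:R * th).
have phim : phi m = 0 by rewrite /phi /th mulrC divfK ?sinpi // pnatr_eq0 -lt0n ltnW.
have phi_pos i : (0 < i < m)%N -> 0 < phi i by exact: sin_frac_pi_gt0.
have phi_ge0 i : (i <= m)%N -> 0 <= phi i.
  rewrite leq_eqVlt => /predU1P[->|im]; first by rewrite phim.
  by case: i im => [|i] im; [rewrite /phi mul0r sin0 | rewrite ltW ?phi_pos].
have phi0Y i : (i <= m)%N -> phi i = 0 -> Y i = 0.
  rewrite leq_eqVlt => /predU1P[-> //|im].
  by case: i im => [|i] im phi0 //; have := phi_pos i.+1 im; rewrite phi0 ltxx.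
pose a i := 1 - phi i.-1 / phi i; pose c i := 1 - phi i.+1 / phi i.
have edge i : (i < m)%N -> a i.+1 * Y i.+1 ^+ 2 + c i * Y i ^+ 2 <= (Y i.+1 - Y i) ^+ 2.
  by move=> im; apply: picone_le; [apply: phi_ge0 | apply: phi_ge0 | apply: phi0Y | apply: phi0Y];
    rewrite // ltnW.
have weight i : (i < m)%N -> (a i + c i) * Y i ^+ 2 = spectral_gap m * Y i ^+ 2.
  case: i => [|i] im; first by rewrite Y0 expr0n /= !mulr0.
  have phi_i : phi i.+1 != 0 by rewrite gt_eqF ?phi_pos.
  congr (_ * _); rewrite /a /c /spectral_gap -/th.
  apply: (mulIf phi_i); rewrite mulrBl -(sin_mul_recurrence th i) -/(phi i) -/(phi i.+2).
  by field.
have shift : \sum_(i < m) a i.+1 * Y i.+1 ^+ 2 = \sum_(i < m) a i * Y i ^+ 2.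
  have := erefl (\sum_(i < m.+1) a i * Y i ^+ 2).
  rewrite [in X in X = _]big_ord_recl big_ord_recr Y0 Ym expr0n /= !mulr0 add0r addr0.
  by move=> ->.
rewrite mulr_sumr; under eq_bigr => i _ do rewrite -(weight i (ltn_ord i)) mulrDl.
by rewrite big_split /= -shift -big_split /=; apply: ler_sum => i _; apply: edge.
Qed.

End Poincare.

Section Antidifference.
Variable R : realType.

(* Summation by parts against the primitive [Y] of [u] reduces the claim to
   [poincare_dirichlet] for [Y]. *)
Lemma poincare_neumann (m : nat) (u : nat -> R) : (1 < m)%N -> \sum_(i < m) u i = 0 ->
  spectral_gap R m * \sum_(i < m) u i ^+ 2 <= \sum_(i < m.-1) (u i.+1 - u i) ^+ 2.
Proof.
move=> m_gt1 u_sum0; pose Y k := \sum_(j < k) u j.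
have Y0 : Y 0%N = 0 by rewrite /Y big_ord0.
have uY j : u j = Y j.+1 - Y j by rewrite /Y big_ord_recr /= addrAC subrr add0r.
have lam_gt0 := spectral_gap_gt0 R m_gt1.
have dirichlet : spectral_gap R m * \sum_(i < m) Y i ^+ 2 <= \sum_(i < m) u i ^+ 2.
  by under [X in _ <= X]eq_bigr do rewrite uY; apply: poincare_dirichlet.
case: m m_gt1 u_sum0 lam_gt0 dirichlet => // m _ Ym.
rewrite -/(Y m.+1) in Ym.
set lam := spectral_gap R m.+1; set S := \sum_(i < m.+1) u i ^+ 2 => lam_gt0 dirichlet /=.
have by_parts : S = - \sum_(j < m) (u j.+1 - u j) * Y j.+1.
  have -> : S = \sum_(j < m.+1) u j * Y j.+1 - \sum_(j < m.+1) u j * Y j.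
    by rewrite -sumrB; apply: eq_bigr => j _; rewrite -mulrBr -uY.
  rewrite big_ord_recr big_ord_recl /= Ym Y0 !mulr0 addr0 add0r -sumrB -sumrN.
  by apply: eq_bigr => j _; rewrite mulrBl opprB.
have am_gm : 2 * lam * S <= lam ^+ 2 * \sum_(i < m.+1) Y i ^+ 2 + \sum_(i < m) (u i.+1 - u i) ^+ 2.
  rewrite big_ord_recl Y0 expr0n /= add0r by_parts mulrN mulr_sumr mulr_sumr -big_split /=.
  rewrite -sumrN; apply: ler_sum => j _.
  by have := sqr_ge0 (lam * Y j.+1 + (u j.+1 - u j)); nra.
have : lam ^+ 2 * \sum_(i < m.+1) Y i ^+ 2 <= lam * S.
  by rewrite expr2 -mulrA; apply: ler_wpM2l; [exact: ltW | exact: dirichlet].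
nra.
Qed.

Lemma antidifference (m : nat) (e : nat -> R) : (1 < m)%N ->
  exists2 u : nat -> R, forall i, u i.+1 - u i = e i &
    spectral_gap R m * \sum_(i < m) u i ^+ 2 <= \sum_(i < m.-1) e i ^+ 2.
Proof.
move=> m_gt1; pose P k := \sum_(j < k) e j.
pose u k := P k - (\sum_(i < m) P i) / m%:R.
have u_incr i : u i.+1 - u i = e i by rewrite /u /P big_ord_recr /=; ring.
exists u => //; under [X in _ <= X]eq_bigr do rewrite -u_incr.
apply: poincare_neumann => //.
rewrite /u big_split /= sumrN sumr_const card_ord -mulr_natr.
by field; rewrite pnatr_eq0 -lt0n ltnW.
Qed.

Lemma second_antidifference (k : nat) (e : nat -> R) :
  exists2 u : nat -> R, forall i, u i - 2 * u i.+1 + u i.+2 = e i &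
    spectral_gap R k.+3 * spectral_gap R k.+2 * \sum_(i < k.+3) u i ^+ 2
      <= \sum_(i < k.+1) e i ^+ 2.
Proof.
have [v v_incr v_le] := @antidifference k.+2 e isT.
have [u u_incr u_le] := @antidifference k.+3 v isT.
exists u => [i|]; first by rewrite -v_incr -!u_incr; ring.
apply: le_trans v_le; rewrite -mulrA mulrCA.
by apply: ler_wpM2l u_le; exact/ltW/spectral_gap_gt0.
Qed.

End Antidifference.

Section Vectors.
Variable R : realType.

Definition vdot (N : nat) (u v : 'cV[R]_N) : R := \sum_i u i 0 * v i 0.

Lemma norm2_ge0 (N : nat) (v : 'cV[R]_N) : 0 <= norm2 v.
Proof. exact: sqrtr_ge0. Qed.

Lemma norm2_sqr (N : nat) (v : 'cV[R]_N) : norm2 v ^+ 2 = \sum_i v i 0 ^+ 2.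
Proof. by rewrite sqr_sqrtr // sumr_ge0 // => i _; apply: sqr_ge0. Qed.

Lemma norm2Z_sqr (N : nat) (t : R) (v : 'cV[R]_N) : norm2 (t *: v) ^+ 2 = t ^+ 2 * norm2 v ^+ 2.
Proof. by rewrite !norm2_sqr mulr_sumr; apply: eq_bigr => i _; rewrite mxE exprMn. Qed.

Lemma vdotZr (N : nat) (t : R) (u v : 'cV[R]_N) : vdot u (t *: v) = t * vdot u v.
Proof. by rewrite /vdot mulr_sumr; apply: eq_bigr => i _; rewrite mxE mulrCA. Qed.

Lemma norm2B_sqr (N : nat) (u v : 'cV[R]_N) :
  norm2 (u - v) ^+ 2 = norm2 u ^+ 2 - 2 * vdot u v + norm2 v ^+ 2.
Proof.
rewrite !norm2_sqr /vdot mulr_sumr -sumrB -big_split /=.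
by apply: eq_bigr => i _; rewrite !mxE; ring.
Qed.

(* Lagrange's identity. *)
Lemma sum_mul_sqr_le (I : finType) (f g : I -> R) :
  (\sum_i f i * g i) ^+ 2 <= (\sum_i f i ^+ 2) * (\sum_i g i ^+ 2).
Proof.
rewrite -subr_ge0.
have -> : (\sum_i f i ^+ 2) * (\sum_i g i ^+ 2) - (\sum_i f i * g i) ^+ 2 =
    (\sum_i \sum_j (f i * g j - f j * g i) ^+ 2) / 2.
  have -> : \sum_i \sum_j (f i * g j - f j * g i) ^+ 2 =
      \sum_i \sum_j f i ^+ 2 * g j ^+ 2 + \sum_i \sum_j f j ^+ 2 * g i ^+ 2
      - 2 * \sum_i \sum_j f i * g i * (f j * g j).
    rewrite mulr_sumr -big_split -sumrB /=; apply: eq_bigr => i _.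
    by rewrite mulr_sumr -big_split -sumrB /=; apply: eq_bigr => j _; ring.
  rewrite (exchange_big _ _ _ _ _ (fun i j => f j ^+ 2 * g i ^+ 2)) /= expr2 !big_distrlr /=.
  by field.
by apply: divr_ge0 => //; apply: sumr_ge0 => i _; apply: sumr_ge0 => j _; apply: sqr_ge0.
Qed.

Lemma vdot_le_norm2 (N : nat) (u v : 'cV[R]_N) : vdot u v <= norm2 u * norm2 v.
Proof.
have sum_sqr_ge0 (w : 'cV[R]_N) : 0 <= \sum_i w i 0 ^+ 2.
  by apply: sumr_ge0 => i _; apply: sqr_ge0.
apply: le_trans (ler_norm _) _; rewrite -sqrtr_sqr /norm2 -sqrtrM // ler_sqrt.
  exact: sum_mul_sqr_le.
by rewrite mulr_ge0.
Qed.

Lemma sum_sqr_le_sqr_sum (I : finType) (P : {pred I}) (a : I -> R) :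
  (forall i, P i -> 0 <= a i) -> \sum_(i in P) a i ^+ 2 <= (\sum_(i in P) a i) ^+ 2.
Proof.
move=> a_ge0; rewrite [leRHS]expr2 mulr_suml; apply: ler_sum => i Pi.
by rewrite expr2 ler_wpM2l ?a_ge0 // (bigD1 i) //= lerDl sumr_ge0 // => j /andP[/a_ge0].
Qed.

End Vectors.

Section SecondDifference.
Variable R : realType.

Lemma diff2E (k p : nat) (A : 'M[R]_(k.+3, p)) (i : 'I_(k.+3 - 2)) (j : 'I_p) :
  (diff2 R k.+3 *m A) i j = A (inord i) j - 2 * A (inord i.+1) j + A (inord i.+2) j.
Proof.
have ik : (i < k.+1)%N := ltn_ord i.
have e0 : (inord i : 'I_k.+3) = i :> nat by rewrite inordK // (ltn_trans ik).
have e1 : (inord i.+1 : 'I_k.+3) = i.+1 :> nat by rewrite inordK // ltnS (ltn_trans ik).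
have e2 : (inord i.+2 : 'I_k.+3) = i.+2 :> nat by rewrite inordK.
rewrite mxE (bigD1 (inord i)) //= (bigD1 (inord i.+1)) /=; last first.
  by rewrite -(inj_eq val_inj) /= e0 e1; lia.
rewrite (bigD1 (inord i.+2)) /=; last first.
  by rewrite -!(inj_eq val_inj) /= e0 e1 e2; lia.
rewrite big1 ?addr0 => [|l /andP[/andP[l0 l1] l2]]; rewrite /diff2 !mxE.
  rewrite e0 e1 e2 eqxx /= (gtn_eqF (ltnSn i)) (gtn_eqF (ltnSn i.+1)).
  by rewrite (gtn_eqF (leqnSn i.+1)) !eqxx; ring.
move: l0 l1 l2; rewrite -!(inj_eq val_inj) /= e0 e1 e2.
by move=> /negbTE-> /negbTE-> /negbTE->; rewrite mul0r.
Qed.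

Lemma diff2_design (n : nat) : diff2 R n *m design R n = 0.
Proof.
case: n => [|[|[|k]]]; try exact: flatmx0.
apply/matrixP => i j; have ik : (i < k.+1)%N := ltn_ord i.
rewrite diff2E !mxE !inordK; try lia.
by case: ifP => _; [ring | rewrite -!natr1; ring].
Qed.

Lemma diff2_bhat (n : nat) (b : 'cV[R]_n) : diff2 R n *m bhat b = 0.
Proof. by rewrite /bhat !mulmxA diff2_design !mul0mx. Qed.

Lemma diff2_surjective (k : nat) (e : 'cV[R]_(k.+3 - 2)) :
  exists2 u : 'cV[R]_k.+3, diff2 R k.+3 *m u = e &
    spectral_gap R k.+3 * spectral_gap R k.+2 * norm2 u ^+ 2 <= norm2 e ^+ 2.
Proof.
have [u u_diff2 u_le] := second_antidifference k (fun i => e (inord i) 0).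
exists (\col_i u i).
  apply/matrixP => i j; have ik : (i < k.+1)%N := ltn_ord i.
  rewrite diff2E !mxE !inordK; try lia.
  by rewrite u_diff2 inord_val [j]ord1.
rewrite !norm2_sqr; under eq_bigr do rewrite mxE.
by under [X in _ <= X]eq_bigr do rewrite -[i in e i]inord_val.
Qed.

End SecondDifference.

Section TruncatedL1.
Variable R : realType.

Lemma trunc_l1_ge0 (m K : nat) (z : 'cV[R]_m) : 0 <= trunc_l1 K z.
Proof.
rewrite /trunc_l1 big_seq sumr_ge0 // => a /mem_take.
by rewrite mem_sort => /mapP[i _ ->].
Qed.

(* Subtracting the threshold [g k.-1] makes the terms of the prefix nonpositive and all the
   others nonnegative. *)
Lemma sum_prefix_le (m k : nat) (g : 'I_m -> R) (B : {set 'I_m}) : (0 < k)%N -> (k <= m)%N ->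
  (forall i j : 'I_m, (i <= j)%N -> g i <= g j) ->
  #|B| = #|[set j : 'I_m | (j < k)%N]| ->
  \sum_(j in [set j : 'I_m | (j < k)%N]) g j <= \sum_(j in B) g j.
Proof.
move=> k_gt0 km g_mono cardB; set P := [set j : 'I_m | (j < k)%N].
have k1 : (k.-1 < m)%N by rewrite prednK.
pose h j := g j - g (Ordinal k1); pose f j := Num.min (h j) 0.
have sum_h (A : {set 'I_m}) : \sum_(j in A) g j = \sum_(j in A) h j + g (Ordinal k1) *+ #|A|.
  by rewrite -sumr_const -big_split /=; apply: eq_bigr => j _; rewrite /h subrK.
rewrite !sum_h cardB lerD2r.
have -> : \sum_(j in P) h j = \sum_j f j.
  rewrite big_mkcond /=; apply: eq_bigr => j _; rewrite /f inE.
  case: ifP => jk; first by rewrite min_l // subr_le0 g_mono //= -ltnS prednK.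
  by rewrite min_r // subr_ge0 g_mono //= -ltnS prednK // leqW // leqNgt jk.
rewrite (bigID (fun j => j \in B)) /= -[leRHS]addr0 lerD ?ler_sum // => [j _|].
  by rewrite ge_min lexx.
by rewrite sumr_le0 // => j _; rewrite ge_min lexx orbT.
Qed.

Lemma trunc_l1_sorted (m K : nat) (z : 'cV[R]_m) : exists p : 'S_m,
    trunc_l1 K z = \sum_(j in [set j : 'I_m | (j < m - K)%N]) `|z (p j) 0| /\
    forall i j : 'I_m, (i <= j)%N -> `|z (p i) 0| <= `|z (p j) 0|.
Proof.
set s := [seq `|z i 0| | i <- enum 'I_m].
have /tuple_permP[p sort_p] : perm_eq (sort <=%R s) [tuple `|z i 0| | i < m].
  by rewrite perm_sort perm_refl.
have nth_sort (j : 'I_m) : nth 0 (sort <=%R s) j = `|z (p j) 0|.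
  by rewrite sort_p nth_mktuple tnth_mktuple.
have size_sort : size (sort <=%R s) = m by rewrite size_sort size_map size_enum_ord.
exists p; split => [|i j ij]; last first.
  rewrite -!nth_sort; apply: (sorted_leq_nth le_trans le_refl); rewrite ?inE ?size_sort //.
  exact: (sort_sorted le_total).
rewrite /trunc_l1 -/s (big_nth 0) size_takel ?size_sort ?leq_subr // big_mkord.
rewrite (big_ord_widen m (fun i => nth 0 (take (m - K) (sort <=%R s)) i)) ?leq_subr //.
by apply: congr_big => // j; rewrite ?inE // => jK; rewrite nth_take // nth_sort.
Qed.

Lemma trunc_l1_active_set (m K : nat) (z : 'cV[R]_m) : (K < m)%N ->
  exists S : {set 'I_m}, trunc_l1 K z = \sum_(i in S) `|z i 0| /\
    forall z' : 'cV[R]_m, trunc_l1 K z' <= \sum_(i in S) `|z' i 0|.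
Proof.
move=> Km; have [p [-> _]] := trunc_l1_sorted K z.
set P := [set j : 'I_m | (j < m - K)%N].
exists (p @: P); split => [|z']; first by rewrite big_imset //; apply: in2W; apply: perm_inj.
have [q [-> q_mono]] := trunc_l1_sorted K z'.
have -> : \sum_(i in p @: P) `|z' i 0| = \sum_(j in (q^-1)%g @: (p @: P)) `|z' (q j) 0|.
  rewrite [RHS]big_imset; last by apply: in2W; apply: perm_inj.
  by apply: eq_bigr => i _; rewrite permKV.
apply: sum_prefix_le q_mono _; rewrite ?subn_gt0 ?leq_subr //.
by rewrite !(card_imset _ (@perm_inj _ _)).
Qed.

Lemma trunc_l1Z_le (m K : nat) (a : R) (z : 'cV[R]_m) : (K < m)%N -> 0 <= a ->
  trunc_l1 K (a *: z) <= a * trunc_l1 K z.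
Proof.
move=> Km a_ge0; have [S [-> S_min]] := trunc_l1_active_set z Km.
apply: le_trans (S_min _) _; rewrite mulr_sumr le_eqVlt; apply/orP; left; apply/eqP.
by apply: eq_bigr => i _; rewrite mxE normrM ger0_norm.
Qed.

End TruncatedL1.

Section DirectionalDerivative.
Local Open Scope classical_set_scope.
Variable R : realType.

Lemma dir_deriv_le (N : nat) (f : 'cV[R]_N -> R) (x d : 'cV[R]_N) (l A B : R) :
  dir_deriv_is f x d l ->
  (forall t, 0 < t -> t < 1 -> (f (x + t *: d) - f x) / t <= A + t * B) -> l <= A.
Proof.
move=> dd_l bound.
have lim_A : (fun t : R => A + t * B) @ 0^'+ --> A.
  apply: cvg_at_right_filter.
  have : (fun t : R => A + t * B) @ 0 --> A + 0 * B.
    by apply: cvgD; [exact: cvg_cst | apply: cvgMl; exact: cvg_id].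
  by rewrite mul0r addr0.
apply: (ler_cvg_to dd_l lim_A); near=> t; apply: bound.
  by near: t; exact: nbhs_right_gt.
by near: t; exact: nbhs_right_lt.
Unshelve. all: by end_near.
Qed.

End DirectionalDerivative.

Section Stationarity.
Variable R : realType.

(* The slope of the objective along [d] is nonnegative and at most
   [- vdot (b - x) d - gamma * T]. *)
Lemma d_stationary_descent (N K : nat) (b x d : 'cV[R]_N) (gamma : R) :
  0 <= gamma -> d_stationary (objective K b gamma) x ->
  (forall t, 0 < t -> t < 1 -> trunc_l1 K (diff2 R N *m (x + t *: d))
                                 <= (1 - t) * trunc_l1 K (diff2 R N *m x)) ->
  vdot (b - x) d + gamma * trunc_l1 K (diff2 R N *m x) <= 0.
Proof.
move=> gamma_ge0 x_stat decay; have [l [dd_l l_ge0]] := x_stat d.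
set T := trunc_l1 K _; suff : l <= - vdot (b - x) d - gamma * T by lra.
apply: (dir_deriv_le (B := norm2 d ^+ 2 / 2) dd_l) => t t_gt0 t_lt1.
rewrite ler_pdivrMr // /objective.
have -> : b - (x + t *: d) = (b - x) - t *: d by rewrite opprD addrA.
rewrite (norm2B_sqr (b - x)) vdotZr norm2Z_sqr -/T.
have := ler_wpM2l gamma_ge0 (decay t t_gt0 t_lt1); rewrite -/T; lra.
Qed.

Lemma d_stationary_residual_le (N K : nat) (b x p : 'cV[R]_N) (gamma : R) :
  (K < N - 2)%N -> 0 <= gamma -> d_stationary (objective K b gamma) x ->
  diff2 R N *m p = 0 -> norm2 (b - x) <= norm2 (b - p).
Proof.
move=> KN gamma_ge0 x_stat Dp.
have T_ge0 := trunc_l1_ge0 K (diff2 R N *m x).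
have descent : vdot (b - x) (p - x) + gamma * trunc_l1 K (diff2 R N *m x) <= 0.
  apply: d_stationary_descent gamma_ge0 x_stat _ => t _ t_lt1.
  have -> : diff2 R N *m (x + t *: (p - x)) = (1 - t) *: (diff2 R N *m x).
    by rewrite mulmxDr -scalemxAr mulmxBr Dp sub0r scalerN scalerBl scale1r.
  by apply: trunc_l1Z_le; rewrite // subr_ge0 ltW.
rewrite -ler_sqr ?nnegrE ?norm2_ge0 //.
have -> : b - p = (b - x) - (p - x) by rewrite opprB addrA subrK.
rewrite (norm2B_sqr (b - x)); have := sqr_ge0 (norm2 (p - x)); have := mulr_ge0 gamma_ge0 T_ge0.
lra.
Qed.

Lemma d_stationary_penalty_le (k K : nat) (b x : 'cV[R]_k.+3) (gamma : R) :
  (K < k.+1)%N -> 0 <= gamma -> d_stationary (objective K b gamma) x ->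
  gamma * Num.sqrt (spectral_gap R k.+3 * spectral_gap R k.+2) * trunc_l1 K (diff2 R k.+3 *m x)
    <= norm2 (b - x) * trunc_l1 K (diff2 R k.+3 *m x).
Proof.
move=> Km gamma_ge0 x_stat; set z := diff2 R k.+3 *m x; set T := trunc_l1 K z.
set s := Num.sqrt _; have s_ge0 : 0 <= s := sqrtr_ge0 _.
have [S [T_S S_min]] := trunc_l1_active_set z Km.
have [u Du u_le] := diff2_surjective (\col_i (if i \in S then z i 0 else 0)).
have penalty_le : gamma * T <= vdot (b - x) u.
  suff : vdot (b - x) (- u) + gamma * T <= 0 by rewrite -(scaleN1r u) vdotZr; lra.
  apply: d_stationary_descent gamma_ge0 x_stat _ => t _ t_lt1; apply: le_trans (S_min _) _.
  rewrite T_S mulr_sumr le_eqVlt; apply/orP; left; apply/eqP; apply: eq_bigr => i iS.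
  rewrite mulmxDr -scalemxAr mulmxN Du !mxE iS; set w := \sum_j _.
  by rewrite mulrN -{1}(mul1r w) -mulrBl normrM ger0_norm // subr_ge0 ltW.
have su_le : s * norm2 u <= T.
  rewrite -ler_sqr ?nnegrE ?mulr_ge0 ?norm2_ge0 ?trunc_l1_ge0 //.
  have gaps_ge0 : 0 <= spectral_gap R k.+3 * spectral_gap R k.+2.
    by rewrite mulr_ge0 // ltW // spectral_gap_gt0.
  rewrite exprMn sqr_sqrtr //; apply: le_trans u_le _.
  rewrite norm2_sqr /T T_S; under eq_bigr do rewrite mxE.
  have -> : \sum_i (if i \in S then z i 0 else 0) ^+ 2 = \sum_(i in S) `|z i 0| ^+ 2.
    rewrite [RHS]big_mkcond; apply: eq_bigr => i _.
    by case: ifP => _; [rewrite real_normK ?num_real | rewrite expr0n].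
  by apply: sum_sqr_le_sqr_sum => i _; apply: normr_ge0.
apply: le_trans (_ : s * (norm2 (b - x) * norm2 u) <= _).
  by rewrite mulrAC mulrC ler_wpM2l // (le_trans penalty_le) ?vdot_le_norm2.
by rewrite mulrCA ler_wpM2l ?norm2_ge0.
Qed.

End Stationarity.

Theorem mainTheorem10 (R : realType) (n K : nat) (b xstar : 'cV[R]_n) (gamma : R) :
  (3 <= n)%N -> (K <= n - 3)%N -> 0 < gamma ->
  d_stationary (objective K b gamma) xstar ->
  norm2 (b - bhat b) /
    (2 * Num.sqrt ((1 - cos (pi / n%:R)) * (1 - cos (pi / (n - 1)%:R)))) < gamma ->
  trunc_l1 K (diff2 R n *m xstar) = 0.
Proof.
move=> n_ge3 Kn gamma_gt0 x_stat gamma_large.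
case: n b xstar n_ge3 Kn x_stat gamma_large => [|[|[|k]]] // b x _ Kn x_stat gamma_large.
have Km : (K < k.+1)%N by lia.
set s := Num.sqrt (spectral_gap R k.+3 * spectral_gap R k.+2).
have s_gt0 : 0 < s by rewrite sqrtr_gt0 mulr_gt0 ?spectral_gap_gt0.
rewrite subn1 -sqrt_spectral_gapM ltr_pdivrMr // in gamma_large.
have residual :=
  d_stationary_residual_le (Km : (K < k.+3 - 2)%N) (ltW gamma_gt0) x_stat (diff2_bhat b).
have penalty := d_stationary_penalty_le Km (ltW gamma_gt0) x_stat.
apply/eqP; rewrite eq_le trunc_l1_ge0 andbT leNgt; apply/negP => T_gt0.
rewrite ler_pM2r // in penalty.
by have := lt_le_trans gamma_large (le_trans penalty residual); rewrite ltxx.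
Qed.
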